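(* Let $n\in\mathbb{N}^*$. Then, almost surely, $$\sup_{f}\ \Big|\mathbb{E}\big[f(Z)\mid\overline Z^{1:\infty}\big]-\mathbb{E}_{\overline Z^n}(f)\Big| \;=\;\sup_{f\in\mathcal L,\ \|f\|_{\mathcal L}\le1}\Big|\mathbb{E}[f(Z)]-\mathbb{E}_{\overline Z^n}(f)\Big|,$$ where the supremum on the left is over all $\overline Z^{1:\infty}$-measurable random functions $f$ such that $\|f\|_{\mathcal L}\le1$ almost surely.
   Context: $Z$ is an $\mathbb{R}^d$-valued random vector with law $\nu$. $\mathcal L$ denotes the Lipschitz functions $\mathbb{R}^d\to\mathbb{R}$ and $\|f\|_{\mathcal L}$ the Lipschitz constant. $(M_n)_{n\ge1}$ are positive integers; $\overline Z^n=(Z^n_k)_{1\le k\le M_n}$ where all $Z^n_k$ ($n\ge1$, $1\le k\le M_n$) are i.i.d. with law $\nu$ and independent of $Z$; $\overline Z^{1:\infty}=(\overline Z^n)_{n\ge1}$. For a collection $\overline Z=(Z_k)_{k\le M}$, $\mathbb{E}_{\overline Z}(f)=\frac1M\sum_{k=1}^Mf(Z_k)$. *)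

From HB Require Import structures.
From mathcomp Require Import all_boot all_order all_algebra.
From mathcomp Require Import all_classical all_reals all_analysis.
Set Implicit Arguments. Unset Strict Implicit. Unset Printing Implicit Defensive.
Import Order.TTheory GRing.Theory Num.Theory.
Local Open Scope classical_set_scope.
Local Open Scope ring_scope.

Section Defs.
Context {R : realType} {dT : measure_display} {Omega : measurableType dT}.
Context {d : nat}.

Definition enorm (x : 'rV[R]_d) : R := Num.sqrt (\sum_(j < d) x ord0 j ^+ 2).

(* f in L with ||f||_L <= 1, i.e. f is 1-Lipschitz for the Euclidean norm *)
Definition lip1 (f : 'rV[R]_d -> R) : Prop :=
  forall x y, `|f x - f y| <= enorm (x - y).

(* Borel sigma-algebra of R^d (= product sigma-algebra, generated by coordinates) *)
Definition borel_rV : set (set 'rV[R]_d) :=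
  <<s [set E | exists (j : 'I_d) (B : set R),
        measurable B /\ E = (fun x : 'rV[R]_d => x ord0 j) @^-1` B] >>.

Definition random_vec (X : Omega -> 'rV[R]_d) : Prop :=
  forall j : 'I_d, measurable_fun setT (fun w => X w ord0 j).

Definition sigmaX (X : Omega -> 'rV[R]_d) : set (set Omega) :=
  [set E | exists2 A, borel_rV A & E = X @^-1` A].

Definition mutual_indep {J : eqType} (P : probability Omega R)
  (F : J -> set (set Omega)) (I : set J) : Prop :=
  forall (s : seq J) (A : J -> set Omega), uniq s -> {subset s <= I} ->
    (forall j, j \in s -> F j (A j)) ->
    P (\big[setI/setT]_(j <- s) A j) = (\prod_(j <- s) P (A j))%E.

Definition meas_wrt (G : set (set Omega)) (Y : Omega -> R) : Prop :=
  forall B : set R, measurable B -> G (Y @^-1` B).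

Definition cond_exp_version (P : probability Omega R) (G : set (set Omega))
  (X Y : Omega -> R) : Prop :=
  [/\ P.-integrable setT (EFin \o X), meas_wrt G Y,
      P.-integrable setT (EFin \o Y) &
      forall A, G A -> (\int[P]_(w in A) (Y w)%:E = \int[P]_(w in A) (X w)%:E)%E].

Definition prod_sigma (G : set (set Omega)) : set (set (Omega * 'rV[R]_d)) :=
  <<s [set E | exists A B, [/\ G A, borel_rV B & E = A `*` B]] >>.

Definition admissible_rf (P : probability Omega R) (G : set (set Omega))
  (f : Omega -> 'rV[R]_d -> R) : Prop :=
  (forall B : set R, measurable B ->
     prod_sigma G ((fun p => f p.1 p.2) @^-1` B)) /\
  {ae P, forall w, lip1 (f w)}.

Definition emp_mean (M : nat -> nat) (Zs : nat -> nat -> Omega -> 'rV[R]_d) (n : nat)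
  (f : Omega -> 'rV[R]_d -> R) (w : Omega) : R :=
  (M n)%:R^-1 * \sum_(k < M n) f w (Zs n k w).

Definition valid_idx (M : nat -> nat) : set (option (nat * nat)) :=
  [set i | match i with None => True
           | Some (m, k) => (0 < m)%N /\ (k < M m)%N end].

Definition zfamily (Z : Omega -> 'rV[R]_d) (Zs : nat -> nat -> Omega -> 'rV[R]_d)
  (i : option (nat * nat)) : set (set Omega) :=
  match i with None => sigmaX Z | Some (m, k) => sigmaX (Zs m k) end.

Definition sigma_all (M : nat -> nat) (Zs : nat -> nat -> Omega -> 'rV[R]_d)
  : set (set Omega) :=
  <<s \bigcup_(i in [set mk : nat * nat | (0 < mk.1)%N /\ (mk.2 < M mk.1)%N])
        sigmaX (Zs i.1 i.2) >>.

Definition is_ess_sup (P : probability Omega R) (Xs : set (Omega -> \bar R))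
  (D : Omega -> \bar R) : Prop :=
  (forall X, Xs X -> {ae P, forall w, (X w <= D w)%E}) /\
  (forall U : Omega -> \bar R,
     (forall X, Xs X -> {ae P, forall w, (X w <= U w)%E}) ->
     {ae P, forall w, (D w <= U w)%E}).

End Defs.

From HB Require Import structures.
From mathcomp Require Import all_boot all_order all_algebra.
From mathcomp Require Import all_classical all_reals all_analysis.
From mathcomp Require Import ring lra measurable_realfun.
Import Order.TTheory GRing.Theory Num.Theory.
Import numFieldNormedType.Exports.
Local Open Scope classical_set_scope.
Local Open Scope ring_scope.

(* Since [Z] is independent of the sample [Zbar^{1:oo}], its joint law with
   the sample is a product measure, and Fubini shows that
   [w |-> \int f (w, y) dnu(y)] is a version of [E[f(., Z) | Zbar^{1:oo}]]; as
   [f w] is a.s. 1-Lipschitz, every admissible gap is a.s. below the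
   supremum over deterministic 1-Lipschitz functions.  Conversely,
   deterministic 1-Lipschitz functions are admissible, and the minima of
   finitely many rational cones [z |-> c + |z - q|] form a countable family
   approximating any 1-Lipschitz [g] from below within [e] everywhere and from
   above within [3 e] at the [M_n] sample points.  An a.s. upper bound of the
   admissible gaps thus bounds, outside a single null set, all the cone gaps
   and hence every deterministic gap. *)

Section cauchy_schwarz.
Context {R : realDomainType} {I : finType}.

Lemma sum_sqr_ge0 (a : I -> R) : 0 <= \sum_i a i ^+ 2.
Proof. by apply: sumr_ge0 => i _; exact: sqr_ge0. Qed.

Lemma cauchy_schwarz_sum (a b : I -> R) :
  (\sum_i a i * b i) ^+ 2 <= (\sum_i a i ^+ 2) * (\sum_i b i ^+ 2).
Proof.
set A := \sum_i a i ^+ 2; set B := \sum_i b i ^+ 2; set C := \sum_i a i * b i.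
have expand x y :
    \sum_i (x * b i - y * a i) ^+ 2 = x ^+ 2 * B - 2 * x * y * C + y ^+ 2 * A.
  by rewrite /A /B /C !mulr_sumr -sumrB -big_split /=; apply: eq_bigr => i _; ring.
have [A0|A_neq0] := eqVneq A 0.
  have a0 i : a i = 0.
    by apply/eqP; rewrite -sqrf_eq0 (psumr_eq0P (fun i _ => sqr_ge0 (a i)) A0).
  by rewrite /C big1 ?expr0n ?mulr_ge0 ?sum_sqr_ge0 // => i _; rewrite a0 mul0r.
have A_gt0 : 0 < A by rewrite lt0r A_neq0 sum_sqr_ge0.
have := sum_sqr_ge0 (fun i => A * b i - C * a i); rewrite expand.
have -> : A ^+ 2 * B - 2 * A * C * C + C ^+ 2 * A = A * (A * B - C ^+ 2) by ring.
by rewrite pmulr_rge0 // subr_ge0.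
Qed.

End cauchy_schwarz.

Section euclidean_norm.
Context {R : realType} {d : nat}.
Implicit Types x y z q : 'rV[R]_d.

Lemma enorm_ge0 x : 0 <= enorm x.
Proof. exact: sqrtr_ge0. Qed.

Lemma enorm_sqr x : enorm x ^+ 2 = \sum_j x ord0 j ^+ 2.
Proof. by rewrite sqr_sqrtr // sum_sqr_ge0. Qed.

Lemma enorm_distC x y : enorm (x - y) = enorm (y - x).
Proof.
by rewrite /enorm -opprB; congr Num.sqrt; apply: eq_bigr => j _; rewrite mxE sqrrN.
Qed.

Lemma ler_enormD x y : enorm (x + y) <= enorm x + enorm y.
Proof.
rewrite -(@ler_pXn2r _ 2) ?nnegrE ?addr_ge0 ?enorm_ge0 //.
have -> : enorm (x + y) ^+ 2 =
    enorm x ^+ 2 + 2 * \sum_j x ord0 j * y ord0 j + enorm y ^+ 2.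
  rewrite !enorm_sqr mulr_sumr -!big_split /=.
  by apply: eq_bigr => j _; rewrite mxE; ring.
have : \sum_j x ord0 j * y ord0 j <= enorm x * enorm y.
  apply: le_trans (ler_norm _) _.
  rewrite -(@ler_pXn2r _ 2) ?nnegrE ?mulr_ge0 ?enorm_ge0 //.
  rewrite -normrX ger0_norm ?sqr_ge0 // exprMn !enorm_sqr.
  exact: cauchy_schwarz_sum.
by rewrite sqrrD; lra.
Qed.

Lemma lip1_enormBr q : lip1 (fun z => enorm (z - q)).
Proof.
move=> z z'; rewrite ler_distl.
have := ler_enormD (z - z') (z' - q); rewrite addrA subrK => le1.
have := ler_enormD (z' - z) (z - q); rewrite addrA subrK (enorm_distC z' z) => le2.
by apply/andP; split; lra.
Qed.

Lemma lip1_ler {g : 'rV[R]_d -> R} : lip1 g -> forall z y, g z <= g y + enorm (z - y).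
Proof. by move=> lg z y; apply: ler_distlDr; exact: lg. Qed.

Lemma lip1N {g : 'rV[R]_d -> R} : lip1 g -> lip1 (fun z => - g z).
Proof. by move=> lg z y; rewrite -opprD normrN; exact: lg. Qed.

End euclidean_norm.

Lemma exists_ratr_near (R : archiRealFieldType) (r e : R) :
  0 < e -> exists c : rat, `|r - ratr c| < e.
Proof.
move=> e0; have /rat_in_itvoo[c] : r < r + e by rewrite ltrDl.
rewrite in_itv /= => /andP[lt_rc lt_ce].
by exists c; rewrite ltr_distl; apply/andP; split; lra.
Qed.

Section rational_vectors.
Context {R : realType} {d : nat}.

Definition ratr_rV (q : 'rV[rat]_d) : 'rV[R]_d := map_mx ratr q.

Lemma exists_ratr_rV_near (x : 'rV[R]_d) (e : R) :
  0 < e -> exists q : 'rV[rat]_d, enorm (x - ratr_rV q) < e.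
Proof.
move=> e0; pose eps := e / d.+1%:R.
have eps_gt0 : 0 < eps by rewrite divr_gt0.
have /choice[c near_c] : forall j : 'I_d, exists c : rat, `|x ord0 j - ratr c| < eps.
  by move=> j; exact: exists_ratr_near.
exists (\row_j c j).
rewrite -(@ltr_pXn2r _ 2) ?nnegrE ?enorm_ge0 ?ltW // enorm_sqr.
apply: (@le_lt_trans _ _ (\sum_(j < d) eps ^+ 2)).
  apply: ler_sum => j _; rewrite !mxE.
  by move: (near_c j); rewrite ltr_norml => /andP[? ?]; nra.
rewrite sumr_const card_ord -mulr_natl.
have -> : d%:R * eps ^+ 2 = e ^+ 2 * (d%:R / d.+1%:R ^+ 2).
  by rewrite /eps; field.
rewrite gtr_pMr ?exprn_gt0 // ltr_pdivrMr ?exprn_gt0 // mul1r.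
by rewrite -natrX ltr_nat expnS expn1 (leq_trans (ltnSn d)) // leq_pmulr.
Qed.

End rational_vectors.

Lemma ler_dist_min (R : realDomainType) (a b a' b' e : R) :
  `|a - a'| <= e -> `|b - b'| <= e -> `|Num.min a b - Num.min a' b'| <= e.
Proof.
have half x y x' y' : `|x - x'| <= e -> `|y - y'| <= e ->
    Num.min x y <= Num.min x' y' + e.
  move=> /ler_distlDr lex /ler_distlDr ley.
  by rewrite addr_minl le_min !ge_min lex ley orbT.
move=> ha hb; rewrite ler_distl (half _ _ _ _ ha hb) andbT lerBlDr.
by apply: half; rewrite distrC.
Qed.

Section rational_cones.
Context {R : realType} {d : nat}.
Implicit Types (g : 'rV[R]_d -> R) (z : 'rV[R]_d) (p : 'rV[rat]_d * rat).

Definition cone p z : R := ratr p.2 + enorm (z - ratr_rV p.1).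

Definition cone_index := ('rV[rat]_d * rat * seq ('rV[rat]_d * rat))%type.

Definition cone_min (i : cone_index) z : R :=
  foldr (fun p m => Num.min (cone p z) m) (cone i.1 z) i.2.

Lemma lip1_cone p : lip1 (cone p).
Proof.
by move=> z z'; rewrite /cone opprD addrACA subrr add0r; exact: lip1_enormBr.
Qed.

Lemma lip1_cone_min i : lip1 (cone_min i).
Proof.
case: i => p0 s; elim: s => [|p s IH] /=; first exact: lip1_cone.
by move=> z z'; apply: ler_dist_min; [exact: lip1_cone|exact: IH].
Qed.

Lemma cone_min_le i p z : p \in i.2 -> cone_min i z <= cone p z.
Proof.
case: i => p0 s /=; elim: s => [//|p' s IH] /=.
by rewrite in_cons ge_min => /orP[/eqP ->|/IH ->]; rewrite ?lexx ?orbT.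
Qed.

Lemma cone_min_ge i z (lb : R) :
  lb <= cone i.1 z -> {in i.2, forall p, lb <= cone p z} -> lb <= cone_min i z.
Proof.
case: i => p0 s /= lb0; elim: s => [//|p s IH] /= lbs.
rewrite le_min lbs ?mem_head //= IH // => q qs.
by rewrite lbs // in_cons qs orbT.
Qed.

Lemma cone_ge_lip1 g e p z : lip1 g -> `|g (ratr_rV p.1) - ratr p.2| < e ->
  g z - e <= cone p z.
Proof.
move=> lg /ltr_distlDr close; have := lip1_ler lg z (ratr_rV p.1).
by rewrite /cone; lra.
Qed.

Lemma cone_le_lip1 g e p z : lip1 g -> `|g (ratr_rV p.1) - ratr p.2| < e ->
  enorm (z - ratr_rV p.1) < e -> cone p z <= g z + 3 * e.
Proof.
move=> lg /ltr_distlCDr close near_z.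
have := lip1_ler lg (ratr_rV p.1) z; rewrite enorm_distC /cone; lra.
Qed.

(* The leading cone, at the origin, only makes the minimum nonempty. *)
Lemma exists_cone_min_approx g (m : nat) (x : 'I_m -> 'rV[R]_d) (e : R) :
  lip1 g -> 0 < e -> exists i : cone_index,
    (forall z, g z - e <= cone_min i z) /\
    (forall k, cone_min i (x k) <= g (x k) + 3 * e).
Proof.
move=> lg e_gt0.
have /choice[c close_c] : forall q : 'rV[rat]_d,
    exists c : rat, `|g (ratr_rV q) - ratr c| < e.
  by move=> q; exact: exists_ratr_near.
have /choice[q near_q] : forall k : 'I_m,
    exists q : 'rV[rat]_d, enorm (x k - ratr_rV q) < e.
  by move=> k; exact: exists_ratr_rV_near.
exists ((0, c 0), [seq (q k, c (q k)) | k <- enum 'I_m]); split.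
  move=> z; apply: cone_min_ge => [|_ /mapP[k _ ->]]; exact: cone_ge_lip1.
move=> k; have := cone_le_lip1 g e (q k, c (q k)) (x k) lg (close_c (q k)) (near_q k).
apply: le_trans.
by apply: cone_min_le; apply: map_f; rewrite mem_enum.
Qed.

End rational_cones.

Section rV_borel.
Context {R : realType} {d : nat}.

Definition rV_coord_gen : set (set 'rV[R]_d) :=
  [set E | exists (j : 'I_d) (B : set R),
     measurable B /\ E = (fun x : 'rV[R]_d => x ord0 j) @^-1` B].

Definition rV_borel := g_sigma_algebraType rV_coord_gen.

Lemma measurable_rV_borelE : @measurable _ rV_borel = <<s rV_coord_gen >>.
Proof. by []. Qed.

Lemma measurable_coord (j : 'I_d) :
  measurable_fun [set: rV_borel] (fun x : rV_borel => x ord0 j).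
Proof. by move=> _ B mB; rewrite setTI; apply: sub_sigma_algebra; exists j, B. Qed.

Lemma measurable_enormBr (v : 'rV[R]_d) :
  measurable_fun [set: rV_borel] (fun x : rV_borel => enorm (x - v)).
Proof.
apply: measurableT_comp; first exact: continuous_measurable_fun (@sqrt_continuous R).
apply: measurable_sum => j /=; under eq_fun do rewrite !mxE.
by apply: measurable_funX; apply: measurable_funB; [exact: measurable_coord|].
Qed.

Lemma measurable_cone p : measurable_fun [set: rV_borel] (cone p).
Proof. exact: measurable_funD (measurable_enormBr _). Qed.

Lemma measurable_cone_min i : measurable_fun [set: rV_borel] (cone_min i).
Proof.
case: i => p0 s; elim: s => [|p s IH] /=; first exact: measurable_cone.
exact: measurable_minr (measurable_cone p) IH.
Qed.

(* [g < a] is the union over rational [q] of the balls [g q + |z - q| < a]. *)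
Lemma measurable_lip1 (g : 'rV[R]_d -> R) :
  lip1 g -> measurable_fun [set: rV_borel] (g : rV_borel -> R).
Proof.
move=> lg; apply: (measurability _ (RGenInftyO.measurableE R)) => //.
move=> _ [_ [a ->] <-].
pose ball_below n : set rV_borel := if unpickle n is Some q
  then (fun z => g (ratr_rV q) + enorm (z - ratr_rV q)) @^-1` `]-oo, a[
  else set0.
have -> : [set: rV_borel] `&` g @^-1` `]-oo, a[ = \bigcup_n ball_below n.
  apply/seteqP; split => z.
    move=> [_ /=]; rewrite in_itv /= => gza.
    have [q near_q] : exists q, enorm (z - ratr_rV q) < (a - g z) / 2.
      by apply: exists_ratr_rV_near; rewrite divr_gt0 // subr_gt0.
    exists (pickle q) => //; rewrite /ball_below pickleK /= in_itv /=.
    by have := lip1_ler lg (ratr_rV q) z; rewrite enorm_distC; lra.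
  move=> [k _]; rewrite /ball_below; case: (unpickle k) => [q|//] /=.
  rewrite !in_itv /= => lt_a; split => //.
  by have := lip1_ler lg z (ratr_rV q); lra.
apply: bigcupT_measurable => k; rewrite /ball_below; case: (unpickle k) => [q|//].
rewrite -[X in measurable X]setTI.
exact: (measurable_funD (measurable_cst _) (measurable_enormBr _)).
Qed.

End rV_borel.

Section random_vectors.
Context {R : realType} {dT : measure_display} {Omega : measurableType dT} {d : nat}.
Implicit Types X : Omega -> 'rV[R]_d.

Lemma measurable_random_vec {X} :
  random_vec X -> measurable_fun [set: Omega] (X : Omega -> rV_borel).
Proof.
move=> rvX; apply: (measurability _ measurable_rV_borelE) => //.
by move=> _ [_ [j [B [mB ->]]] <-]; exact: rvX.
Qed.

Lemma sigmaX_measurable {X} : random_vec X -> sigmaX X `<=` measurable.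
Proof.
move=> rvX _ [A bA ->]; rewrite -[X in measurable X]setTI.
exact: measurable_random_vec.
Qed.

Lemma sigmaXT X : sigmaX X setT.
Proof. by exists setT; [exact: (@measurableT _ rV_borel)|rewrite preimage_setT]. Qed.

Lemma sigmaXI X : setI_closed (sigmaX X).
Proof.
move=> _ _ [A bA ->] [B bB ->]; exists (A `&` B); last by rewrite preimage_setI.
exact: (@measurableI _ rV_borel).
Qed.

End random_vectors.

Section finite_intersections.
Context {T : pointedType} {J : choiceType} (F : J -> set (set T)) (I : set J).

Definition fin_inter : set (set T) :=
  [set E | exists (s : seq J) (A : J -> set T),
     [/\ uniq s, (forall j, j \in s -> I j /\ F j (A j))
       & E = \big[setI/setT]_(j <- s) A j]].

Lemma fin_inter_setI_closed :
  (forall j, I j -> F j setT) -> (forall j, I j -> setI_closed (F j)) ->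
  setI_closed fin_inter.
Proof.
move=> FT FI _ _ [s1 [A1 [s1_uniq s1F ->]]] [s2 [A2 [s2_uniq s2F ->]]].
exists (undup (s1 ++ s2)), (fun j =>
  (if j \in s1 then A1 j else setT) `&` (if j \in s2 then A2 j else setT)).
split; first exact: undup_uniq.
  move=> j; rewrite mem_undup mem_cat => s12j.
  have Ij : I j by case/orP: s12j => [/s1F|/s2F] [].
  split => //; apply: FI => //.
    by case: ifP => [/s1F[]|_]; [|exact: FT].
  by case: ifP => [/s2F[]|_]; [|exact: FT].
rewrite -!bigcap_seq; apply/seteqP; split => x.
  move=> [x1 x2] j /=; rewrite mem_undup mem_cat => _.
  by split; case: ifP => // ?; [exact: x1|exact: x2].
move=> xA; split => j /= sj; have /= := xA j.
  by rewrite mem_undup mem_cat sj => /(_ isT) [].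
by rewrite mem_undup mem_cat sj orbT => /(_ isT) [].
Qed.

Lemma sigma_fin_inter : <<s fin_inter >> = <<s \bigcup_(j in I) F j >>.
Proof.
pose TF := g_sigma_algebraType (\bigcup_(j in I) F j).
apply/seteqP; split; apply: smallest_sub; try exact: smallest_sigma_algebra.
  move=> _ [s [A [_ sF ->]]]; elim: s sF => [|j s IH] sF.
    by rewrite big_nil; exact: (@measurableT _ TF).
  rewrite big_cons; apply: (@measurableI _ TF).
    by have [Ij FjA] := sF j (mem_head _ _); apply: sub_sigma_algebra; exists j.
  by apply: IH => k sk; apply: sF; rewrite in_cons sk orbT.
move=> E [j Ij FjE]; apply: sub_sigma_algebra; exists [:: j], (fun _ => E).
by rewrite big_seq1; split => // k; rewrite mem_seq1 => /eqP ->.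
Qed.

End finite_intersections.

Section independence.
Context {d : measure_display} {T : measurableType d} {R : realType}.
Variable P : probability T R.
Local Open Scope ereal_scope.

Lemma indep_setC (S C : set T) : measurable S -> measurable C ->
  P (S `&` C) = P S * P C -> P (~` S `&` C) = P (~` S) * P C.
Proof.
move=> mS mC indepSC.
have -> : P (~` S `&` C) = P C - P (S `&` C).
  rewrite setIC -setDE setIC; apply: measureD => //.
  by rewrite ltey_eq fin_num_measure.
rewrite probability_setC // indepSC -(fineK (fin_num_measure P _ mS)).
by rewrite -(fineK (fin_num_measure P _ mC)) -!EFinM -!EFinB; congr EFin; ring.
Qed.

Lemma indep_bigcup (F : (set T)^nat) (C : set T) :
  (forall k, measurable (F k)) -> trivIset setT F -> measurable C ->
  (forall k, P (F k `&` C) = P (F k) * P C) ->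
  P (\bigcup_k F k `&` C) = P (\bigcup_k F k) * P C.
Proof.
move=> mF tF mC indepF.
rewrite setI_bigcupl !measure_bigcup //; last 2 first.
- by move=> k _; apply: measurableI.
- exact: trivIset_setIr.
rewrite -(fineK (fin_num_measure P _ mC)) muleC -nneseriesZl; last first.
  by move=> k _; exact: measure_ge0.
apply: eq_eseriesr => k _; rewrite (fineK (fin_num_measure P _ mC)) muleC.
exact: indepF.
Qed.

Lemma indep_sigma (G : set (set T)) (C : set T) :
  setI_closed G -> G `<=` measurable -> measurable C ->
  (forall E, G E -> P (E `&` C) = P E * P C) ->
  forall E, <<s G >> E -> P (E `&` C) = P E * P C.
Proof.
move=> GI Gm mC indepG.
have sGm : <<s G >> `<=` measurable.
  by apply: smallest_sub => //; exact: sigma_algebra_measurable.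
apply: (@dynkin_induction _ (g_sigma_algebraType G) G
  (fun S => P (S `&` C) = P S * P C)) => //.
- by rewrite setTI probability_setT mul1e.
- by move=> S /sGm mS; exact: indep_setC.
- by move=> F mF tF; apply: (@indep_bigcup F C) => // k; apply: sGm; exact: mF.
Qed.

End independence.

Section freezing.
Context {d1 d2 d : measure_display} {T1 : measurableType d1}
  {T2 : measurableType d2} {T : measurableType d} {R : realType}.
Context {P : probability T R} {X : {mfun T >-> T1}} {Y : {mfun T >-> T2}}.
Hypothesis indepXY : forall A B, measurable A -> measurable B ->
  P (X @^-1` A `&` Y @^-1` B) = (P (X @^-1` A) * P (Y @^-1` B))%E.
Local Open Scope ereal_scope.

Definition pairXY (w : T) : T1 * T2 := (X w, Y w).

HB.instance Definition _ := isMeasurableFun.Build _ _ _ _ pairXY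
  (measurable_fun_pair (@measurable_funPT _ _ _ _ X) (@measurable_funPT _ _ _ _ Y)).

Local Notation PX := (distribution P X).
Local Notation PY := (distribution P Y).

Lemma product_distribution (S : set (T1 * T2)) :
  measurable S -> (PX \x PY) S = distribution P pairXY S.
Proof. by apply: product_measure_unique => A B mA mB; rewrite /= -indepXY. Qed.

Lemma integrable_product_distribution (F : T1 * T2 -> \bar R) :
  measurable_fun setT F -> P.-integrable setT (F \o pairXY) ->
  (PX \x PY).-integrable setT F.
Proof.
move=> mF iF.
have : (distribution P pairXY).-integrable setT F.
  by apply: (integrable_pushforward (@measurable_funPT _ _ _ _ pairXY)).
move=> /integrableP[_ finF]; apply/integrableP; split => //.
rewrite (eq_measure_integral (distribution P pairXY)) // => S mS _.
exact: product_distribution.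
Qed.

(* The freezing lemma: [x |-> \int F (x, y) dPY] is a version of
   [E[F (X, Y) | X]]. *)
Lemma integral_freeze (F : T1 * T2 -> \bar R) (A : set T1) :
  measurable_fun setT F -> P.-integrable setT (F \o pairXY) -> measurable A ->
  \int[P]_(w in X @^-1` A) F (X w, Y w) = \int[PX]_(x in A) fubini_F PY F x.
Proof.
move=> mF iF mA.
have mAT : measurable (A `*` [set: T2]) by exact: measurableX.
have iFp := integrable_product_distribution _ mF iF.
have iFA : (PX \x PY).-integrable setT (F \_ (A `*` setT)).
  by apply/(integrable_mkcond _ mAT); apply: integrableS iFp.
rewrite [RHS]integral_mkcond.
have -> : (fubini_F PY F) \_ A = fubini_F PY (F \_ (A `*` setT)).
  apply/funext => x; rewrite /patch /fubini_F /patch.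
  case: (boolP (x \in A)) => xA.
    apply: eq_integral => y _; rewrite ifT //.
    by apply/mem_set; split => //; exact/set_mem.
  rewrite (eq_integral (cst 0)) ?integral0 // => y _; rewrite ifF //.
  by apply/negP => /set_mem [Ax _]; move: xA; rewrite (mem_set Ax).
rewrite (integral12_prod_meas1 iFA) -integral_mkcond.
rewrite (eq_measure_integral (distribution P pairXY)); last first.
  by move=> S mS _; exact: product_distribution.
have XA : pairXY @^-1` (A `*` setT) = X @^-1` A.
  by apply/seteqP; split => w //= [].
rewrite integral_pushforward //; first by congr integral; rewrite XA.
by apply: (integrableS measurableT) => //; exact: measurable_funPTI.
Qed.

End freezing.

Lemma ae_forall_countable {d : measure_display} {T : measurableType d}
    {R : realType} (mu : {measure set T -> \bar R}) (I : countType)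
    (Q : I -> T -> Prop) :
  (forall i, {ae mu, forall w, Q i w}) -> {ae mu, forall w, forall i, Q i w}.
Proof.
move=> aeQ.
have : {ae mu, forall w k, if unpickle k is Some i then Q i w else True}.
  by apply: ae_foralln => k; case: (unpickle k) => [i|]; [exact: aeQ|exact: aeW].
by apply: filterS => w Qw i; have := Qw (pickle i); rewrite pickleK.
Qed.

Section empirical_mean.
Context {R : realType} {dT : measure_display} {Omega : measurableType dT} {d : nat}.
Variables (M : nat -> nat) (Zs : nat -> nat -> Omega -> 'rV[R]_d) (n : nat).
Implicit Types (h : 'rV[R]_d -> R) (w : Omega).

Lemma emp_meanN h w :
  emp_mean M Zs n (fun _ z => - h z) w = - emp_mean M Zs n (fun _ => h) w.
Proof. by rewrite /emp_mean sumrN mulrN. Qed.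

Lemma emp_mean_le h1 h2 w (c : R) : (0 < M n)%N ->
  (forall k : 'I_(M n), h1 (Zs n k w) <= h2 (Zs n k w) + c) ->
  emp_mean M Zs n (fun _ => h1) w <= emp_mean M Zs n (fun _ => h2) w + c.
Proof.
move=> Mn_gt0 le_h.
have Mn_neq0 : (M n)%:R != 0 :> R by rewrite pnatr_eq0 -lt0n.
rewrite /emp_mean -[c in X in _ <= X](mulKf Mn_neq0) -mulrDr.
apply: ler_wpM2l; first by rewrite invr_ge0.
rewrite mulr_natl -[X in c *+ X]card_ord -sumr_const -big_split.
exact: ler_sum.
Qed.

End empirical_mean.

Section conditional_lipschitz_gap.
Context {R : realType} {dT : measure_display} {Omega : measurableType dT} {d : nat}.
Variables (P : probability Omega R) (M : nat -> nat) (Z : Omega -> 'rV[R]_d)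
  (Zs : nat -> nat -> Omega -> 'rV[R]_d).
Hypothesis Z_rv : random_vec Z.
Hypothesis Zs_rv : forall m k, (0 < m)%N -> (k < M m)%N -> random_vec (Zs m k).
Hypothesis indep_Z_Zs : mutual_indep P (zfamily Z Zs) (valid_idx M).

Local Notation rVB := (@rV_borel R d).

Definition sample_idx : set (nat * nat) := [set mk | (0 < mk.1)%N /\ (mk.2 < M mk.1)%N].

Definition sample_sigma (mk : nat * nat) : set (set Omega) := sigmaX (Zs mk.1 mk.2).

Definition Omega_sample :=
  g_sigma_algebraType (\bigcup_(mk in sample_idx) sample_sigma mk).

Lemma sigma_all_measurable : sigma_all M Zs `<=` measurable.
Proof.
apply: smallest_sub; first exact: sigma_algebra_measurable.
by move=> E [mk [m_gt0 k_lt] sE]; exact: (sigmaX_measurable (Zs_rv _ _ m_gt0 k_lt)).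
Qed.

Definition to_sample (w : Omega) : Omega_sample := w.

Lemma measurable_to_sample : measurable_fun [set: Omega] to_sample.
Proof. by move=> _ A /sigma_all_measurable; rewrite setTI. Qed.

HB.instance Definition _ :=
  isMeasurableFun.Build _ _ _ _ to_sample measurable_to_sample.

Definition Z_borel (w : Omega) : rVB := Z w.

HB.instance Definition _ :=
  isMeasurableFun.Build _ _ _ _ Z_borel (measurable_random_vec Z_rv).

Local Notation Z_law := (distribution P Z_borel).
Local Notation sample_law := (distribution P to_sample).

Lemma indep_fin_inter_Z (B : set 'rV[R]_d) : borel_rV B ->
  forall E, fin_inter sample_sigma sample_idx E ->
  P (E `&` Z @^-1` B) = (P E * P (Z @^-1` B))%E.
Proof.
move=> bB _ [s [A [s_uniq sA ->]]].
pose F o := if o is Some mk then A mk else Z @^-1` B.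
have indep_seq (t : seq (option (nat * nat))) :
    uniq t -> {subset t <= None :: map Some s} ->
    P (\big[setI/setT]_(o <- t) F o) = (\prod_(o <- t) P (F o))%E.
  move=> t_uniq t_sub; apply: indep_Z_Zs => // o /t_sub; rewrite in_cons.
    by case/orP => [/eqP ->|/mapP[[m k] /sA[Imk _] ->]]; rewrite in_setE.
  by case/orP => [/eqP -> /=|/mapP[[m k] /sA[_ Amk] ->]] //; exists B.
have Some_uniq : uniq (map Some s) by rewrite map_inj_uniq // => ? ? [].
have all_uniq : uniq (None :: map Some s).
  by rewrite /= Some_uniq andbT; apply/mapP => -[].
have := indep_seq _ Some_uniq (@mem_behead _ (None :: map Some s)).
have := indep_seq _ all_uniq (fun o => id).
by rewrite !big_cons !big_map /= setIC => -> ->; rewrite muleC.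
Qed.

Lemma indep_sample_Z (A : set Omega) (B : set 'rV[R]_d) :
  sigma_all M Zs A -> borel_rV B -> P (A `&` Z @^-1` B) = (P A * P (Z @^-1` B))%E.
Proof.
have sigma_allE : sigma_all M Zs = <<s fin_inter sample_sigma sample_idx >>.
  by rewrite sigma_fin_inter.
move=> sA bB; move: A sA; rewrite sigma_allE; apply: indep_sigma.
- by apply: fin_inter_setI_closed => mk _; [exact: sigmaXT|exact: sigmaXI].
- move=> E /sub_sigma_algebra sE; apply: sigma_all_measurable.
  by rewrite sigma_allE; exact: sE.
- by apply: (sigmaX_measurable Z_rv); exists B.
- exact: indep_fin_inter_Z.
Qed.

Lemma indep_to_sample_Z_borel (A : set Omega_sample) (B : set rVB) :
  measurable A -> measurable B -> P (to_sample @^-1` A `&` Z_borel @^-1` B) =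
  (P (to_sample @^-1` A) * P (Z_borel @^-1` B))%E.
Proof. exact: indep_sample_Z. Qed.

Lemma measurable_prod_sigma (f : Omega -> 'rV[R]_d -> R) :
  (forall B : set R, measurable B ->
     prod_sigma (sigma_all M Zs) ((fun p => f p.1 p.2) @^-1` B)) ->
  measurable_fun [set: Omega_sample * rVB] (fun p => (f p.1 p.2)%:E).
Proof.
move=> f_prod; apply/measurable_EFinP => _ B mB; rewrite setTI.
have : prod_sigma (sigma_all M Zs) `<=` @measurable _ (Omega_sample * rVB)%type.
  apply: smallest_sub; first exact: sigma_algebra_measurable.
  by move=> _ [A [B' [sA bB' ->]]]; exact: measurableX.
by apply; exact: f_prod.
Qed.

Local Notation freeze f :=
  (fubini_F Z_law (fun p : Omega_sample * rVB => (f p.1 p.2)%:E)).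

Lemma cond_exp_version_ae (f : Omega -> 'rV[R]_d -> R) (Y : Omega -> R) :
  measurable_fun [set: Omega_sample * rVB] (fun p => (f p.1 p.2)%:E) ->
  cond_exp_version P (sigma_all M Zs) (fun w => f w (Z w)) Y ->
  {ae P, forall w, (Y w)%:E = freeze f w}.
Proof.
move=> mf [fZ_int mY Y_int Y_version].
have f_int := integrable_product_distribution indep_to_sample_Z_borel _ mf fZ_int.
have mY' : measurable_fun [set: Omega_sample] (fun w => (Y w)%:E).
  by apply/measurable_EFinP => _ B mB; rewrite setTI; exact: mY.
have : ae_eq sample_law setT (freeze f) (fun w => (Y w)%:E).
  apply: integral_ae_eq => //; first exact: integrable_fubini_F f_int.
  move=> E _ mE; rewrite -(integral_freeze indep_to_sample_Z_borel) // -Y_version //.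
  rewrite integral_pushforward //.
  exact: (integrableS measurableT (sigma_all_measurable _ mE) (@subsetT _ _) Y_int).
move=> [N [mN N0 sub]]; exists N; split => //; first exact: sigma_all_measurable.
by move=> w /= Nw; apply: sub => eqw; apply: Nw; rewrite eqw.
Qed.

Hypothesis Z_integrable : P.-integrable setT (fun w => (enorm (Z w))%:E).

Lemma integrable_lip1 (h : 'rV[R]_d -> R) :
  lip1 h -> P.-integrable setT (fun w => (h (Z w))%:E).
Proof.
move=> lh.
apply: (@le_integrable _ _ _ P setT measurableT _ (fun w => (`|h 0| + enorm (Z w))%:E)).
- apply/measurable_EFinP; apply: measurableT_comp (measurable_lip1 _ lh) _.
  exact: measurable_random_vec Z_rv.
- move=> w _; rewrite !abse_EFin lee_fin [X in _ <= X]ger0_norm ?addr_ge0 ?enorm_ge0 //.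
  have := lh (Z w) 0; rewrite subr0 => lip_Zw.
  by have := ler_normD (h (Z w) - h 0) (h 0); rewrite subrK; lra.
- under eq_fun do rewrite EFinD.
  by apply: integrableD => //; exact: finite_measure_integrable_cst.
Qed.

Definition EZ (h : 'rV[R]_d -> R) : R := fine (\int[P]_w (h (Z w))%:E)%E.
Implicit Types g h : 'rV[R]_d -> R.

Lemma EZE h : lip1 h -> (\int[P]_w (h (Z w))%:E = (EZ h)%:E)%E.
Proof.
by move=> lh; rewrite fineK //; exact: integrable_fin_num (integrable_lip1 _ lh).
Qed.

Lemma Z_law_integral h : lip1 h -> (\int[Z_law]_y (h y)%:E = (EZ h)%:E)%E.
Proof.
move=> lh; rewrite -EZE // integral_pushforward //.
- by apply/(measurable_EFinP [set: rVB] (h : rVB -> R)); exact: measurable_lip1.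
- by rewrite preimage_setT; exact: integrable_lip1.
Qed.

Lemma EZ_le h1 h2 (e : R) : lip1 h1 -> lip1 h2 -> (forall z, h1 z - e <= h2 z) ->
  EZ h1 - e <= EZ h2.
Proof.
move=> lh1 lh2 le_h; rewrite -lee_fin EFinB -!EZE //.
have e_int : P.-integrable setT (EFin \o (fun _ : Omega => e)).
  exact: finite_measure_integrable_cst.
have -> : (e%:E = \int[P]_w ((fun _ : Omega => e) w)%:E)%E.
  by rewrite integral_cst // [X in (_ * X)%E]probability_setT mule1.
rewrite -(integralB_EFin measurableT (integrable_lip1 _ lh1) e_int).
apply: le_integral => //; last by move=> w _; rewrite -EFinB lee_fin.
  by apply: integrableB => //; exact: integrable_lip1.
exact: integrable_lip1.
Qed.

Lemma EZN h : lip1 h -> EZ (fun z => - h z) = - EZ h.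
Proof.
move=> lh; rewrite /EZ; under eq_integral do rewrite EFinN.
rewrite integralN ?fineN // fin_num_adde_defr //.
exact: integrable_pos_fin_num (integrable_lip1 _ lh).
Qed.

Lemma admissible_lip1 g : lip1 g -> admissible_rf P (sigma_all M Zs) (fun _ => g).
Proof.
move=> lg; split; last by apply: aeW.
move=> B mB; apply: sub_sigma_algebra; exists setT, (g @^-1` B).
split; first exact: (@measurableT _ Omega_sample).
  by have := measurable_lip1 _ lg measurableT B mB; rewrite setTI.
by apply/seteqP; split => -[w z] //= [].
Qed.

Lemma cond_exp_version_lip1 g :
  lip1 g -> cond_exp_version P (sigma_all M Zs) (fun w => g (Z w)) (fun _ => EZ g).
Proof.
move=> lg; split; [exact: integrable_lip1| |exact: finite_measure_integrable_cst|].
  move=> B mB; rewrite preimage_cst; case: ifP => _.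
    exact: (@measurableT _ Omega_sample).
  exact: (@measurable0 _ Omega_sample).
move=> A sA.
have mg : measurable_fun [set: Omega_sample * rVB] (fun p => (g p.2)%:E).
  apply/(measurable_EFinP _ (fun p : Omega_sample * rVB => g p.2)).
  exact: measurableT_comp (measurable_lip1 _ lg) measurable_snd.
rewrite (integral_freeze indep_to_sample_Z_borel _ _ mg) //; last first.
  exact: integrable_lip1.
rewrite /fubini_F /= Z_law_integral //.
by rewrite !integral_cst //; exact: sigma_all_measurable.
Qed.

Variable n : nat.

Definition lip_gap_sup (w : Omega) : \bar R :=
  ereal_sup [set x | exists g, lip1 g /\
    x = `|(\int[P]_v (g (Z v))%:E - (emp_mean M Zs n (fun _ => g) w)%:E)|%E].

Definition cond_gap_family : set (Omega -> \bar R) :=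
  [set X | exists f Y, [/\ admissible_rf P (sigma_all M Zs) f,
     cond_exp_version P (sigma_all M Zs) (fun w => f w (Z w)) Y &
     X = (fun w => (`|Y w - emp_mean M Zs n f w|)%:E)]].

Lemma cond_gap_le_lip_gap_sup X :
  cond_gap_family X -> {ae P, forall w, (X w <= lip_gap_sup w)%E}.
Proof.
move=> [f [Y [[f_prod f_lip] Y_version ->]]].
have := cond_exp_version_ae _ _ (measurable_prod_sigma _ f_prod) Y_version.
apply: filterS2 f_lip => w lip_fw; rewrite /fubini_F /= Z_law_integral // => -[Yw].
apply: ereal_sup_ubound; exists (f w); split => //.
by rewrite EZE // -EFinB Yw.
Qed.

Hypothesis Mn_gt0 : (0 < M n)%N.

Definition cone_gap (i : @cone_index d) (w : Omega) : \bar R :=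
  (`|EZ (cone_min i) - emp_mean M Zs n (fun _ => cone_min i) w|)%:E.

Lemma cone_gap_in_family i : cond_gap_family (cone_gap i).
Proof.
exists (fun _ => cone_min i), (fun _ => EZ (cone_min i)); split => //.
  exact/admissible_lip1/lip1_cone_min.
exact/cond_exp_version_lip1/lip1_cone_min.
Qed.

Lemma lip_gap_le_cone_gaps h w (U : Omega -> \bar R) (e : R) :
  (forall i, (cone_gap i w <= U w)%E) -> lip1 h -> 0 < e ->
  ((EZ h - emp_mean M Zs n (fun _ => h) w - 4 * e)%:E <= U w)%E.
Proof.
move=> le_U lh e_gt0.
have [i [below above]] :=
  exists_cone_min_approx _ _ (fun k : 'I_(M n) => Zs n k w) _ lh e_gt0.
apply: le_trans (le_U i); rewrite /cone_gap lee_fin.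
have := EZ_le _ _ _ lh (lip1_cone_min i) below.
have := emp_mean_le M Zs n _ _ w _ Mn_gt0 above.
by move=> ? ?; apply: le_trans (ler_norm _); lra.
Qed.

Lemma lip_gap_sup_le U :
  (forall X, cond_gap_family X -> {ae P, forall w, (X w <= U w)%E}) ->
  {ae P, forall w, (lip_gap_sup w <= U w)%E}.
Proof.
move=> U_bound.
have := ae_forall_countable P _ (fun (i : @cone_index d) w => (cone_gap i w <= U w)%E)
  (fun i => U_bound _ (cone_gap_in_family i)).
apply: filterS => w le_U; apply: ge_ereal_sup => _ [g [lg ->]].
rewrite EZE // -EFinB abse_EFin; apply/lee_addgt0Pr => e e_gt0.
rewrite -leeBlDr // -EFinB.
have e4_gt0 : 0 < e / 4 by rewrite divr_gt0.
have e4E : 4 * (e / 4) = e by field.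
have [gap_ge0|gap_lt0] := lerP 0 (EZ g - emp_mean M Zs n (fun _ => g) w).
  by rewrite ger0_norm // -[X in _ - X]e4E; exact: lip_gap_le_cone_gaps.
have := lip_gap_le_cone_gaps _ _ _ _ le_U (lip1N lg) e4_gt0.
rewrite EZN // emp_meanN e4E ltr0_norm //; apply: le_trans.
by rewrite lee_fin; lra.
Qed.

End conditional_lipschitz_gap.

Theorem lemma2 (R : realType) (dT : measure_display) (Omega : measurableType dT)
  (P : probability Omega R) (d : nat) (M : nat -> nat)
  (Z : Omega -> 'rV[R]_d) (Zs : nat -> nat -> Omega -> 'rV[R]_d) (n : nat) :
  (forall m, (0 < M m)%N) ->
  random_vec Z ->
  (forall m k, (0 < m)%N -> (k < M m)%N -> random_vec (Zs m k)) ->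
  (forall m k, (0 < m)%N -> (k < M m)%N ->
     forall A, borel_rV A -> P (Zs m k @^-1` A) = P (Z @^-1` A)) ->
  mutual_indep P (zfamily Z Zs) (valid_idx M) ->
  P.-integrable setT (fun w => (enorm (Z w))%:E) ->
  (0 < n)%N ->
  is_ess_sup P
    [set X | exists f Y, [/\ admissible_rf P (sigma_all M Zs) f,
        cond_exp_version P (sigma_all M Zs) (fun w => f w (Z w)) Y &
        X = (fun w => (`|Y w - emp_mean M Zs n f w|)%:E)]]
    (fun w => ereal_sup [set x | exists g, lip1 g /\
        x = `|(\int[P]_v (g (Z v))%:E - (emp_mean M Zs n (fun _ => g) w)%:E)|%E]).
Proof.
move=> M_gt0 Z_rv Zs_rv _ indep Z_int _; split.
  exact: cond_gap_le_lip_gap_sup.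
exact: lip_gap_sup_le.
Qed.
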